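(* Let $f\colon V_0\to\mathbb{R}$ be continuous such that $\Gamma_f$ is a ruled surface. Let $R_1,R_2$ be distinct rulings of $\Gamma_f$ with $w_z(R_1)<w_z(R_2)$. Then $g_{R_1}(x)\le g_{R_2}(x)$ for all $x\in\mathbb{R}$ and $m(R_1)\ge m(R_2)$.
   Context: $\mathbb{H}$ is $\mathbb{R}^3$ with product $(x,y,z)\cdot(x',y',z')=(x+x',y+y',z+z'+\frac{xy'-yx'}{2})$; $X=(1,0,0)$, $Y=(0,1,0)$, $v^t=tv$. A horizontal line is $\{p\cdot tv\}$ with $v=(a,b,0)\ne0$, slope $b/a$; a ruled surface is a union of horizontal line segments (rulings) with endpoints in its boundary; since $\Gamma_f$ is entire, its rulings are horizontal lines, each of the form $\{w\cdot(X+mY)^t:t\in\mathbb{R}\}$. $V_0=\{(x,0,z)\}$, $\Gamma_f=\{u\cdot Y^{f(u)}:u\in V_0\}$, $\Pi(x,y,z)=(x,0,z-\frac{xy}2)$. For a ruling $R$: $m(R)$ is its slope, $w(R)=(0,w_y(R),w_z(R))$ is its intersection with the $yz$-plane, and $g_R(x)=w_z(R)-w_y(R)x-\frac{m(R)}2x^2$, so that $\Pi(R)=\{(x,0,g_R(x)):x\in\mathbb{R}\}$. *)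

From Stdlib Require Import Reals.
From Coquelicot Require Import Coquelicot.
Open Scope R_scope.

Definition Hpt := (R * R * R)%type.

Definition hmul (p q : Hpt) : Hpt :=
  let '(x, y, z) := p in let '(x', y', z') := q in
  (x + x', y + y', z + z' + (x * y' - y * x') / 2).

Definition hpow (v : Hpt) (t : R) : Hpt :=
  let '(a, b, c) := v in (t * a, t * b, t * c).

Definition hX : Hpt := (1, 0, 0).
Definition hY : Hpt := (0, 1, 0).

Definition V0pt (u : R * R) : Hpt := (fst u, 0, snd u).

(* Intrinsic graph Gamma_f = { u . Y^{f(u)} : u in V_0 }, with f : V_0 -> R
   represented as a function of (x,z). *)
Definition Gamma (f : R * R -> R) (q : Hpt) : Prop :=
  exists u : R * R, q = hmul (V0pt u) (hpow hY (f u)).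

Definition horizontal_vec (v : Hpt) : Prop :=
  let '(a, b, c) := v in c = 0 /\ (a <> 0 \/ b <> 0).

Definition hline (p v : Hpt) (q : Hpt) : Prop :=
  exists t : R, q = hmul p (hpow v t).

Definition is_ruling (f : R * R -> R) (L : Hpt -> Prop) : Prop :=
  exists p v : Hpt, horizontal_vec v /\
    (forall q, L q <-> hline p v q) /\ (forall q, L q -> Gamma f q).

Definition ruled (f : R * R -> R) : Prop :=
  forall q, Gamma f q -> exists L, is_ruling f L /\ L q.

Definition ruling_line (wy wz m : R) : Hpt -> Prop :=
  hline (0, wy, wz) (1, m, 0).

Definition gR (wy wz m x : R) : R := wz - wy * x - m / 2 * x ^ 2.

(* A point (x, y, z) of Gamma_f satisfies f (x, z - x y / 2) = y, i.e. f is
   read off through the projection Pi.  Walking along a ruling R, the point of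
   parameter t projects to (t, g_R t) and carries y = w_y(R) + t m(R), which is
   -g_R'(t).  Hence where g_{R1} and g_{R2} cross, their derivatives agree: the
   quadratic g_{R2} - g_{R1}, positive at 0, has only double roots, so its
   discriminant is nonpositive; it is then nonnegative with nonnegative leading
   coefficient (m(R1) - m(R2)) / 2. *)

From Stdlib Require Import Reals Lra Psatz.
From Coquelicot Require Import Coquelicot.
Open Scope R_scope.

Lemma Gamma_projection (f : R * R -> R) (x y z : R) :
  Gamma f (x, y, z) -> f (x, z - x * y / 2) = y.
Proof.
  intros [[u1 u2] Hu]; unfold hmul, hpow, V0pt, hY in Hu; simpl in Hu.
  injection Hu as -> -> ->.
  replace (_, _) with (u1, u2) by (f_equal; field).
  ring.
Qed.

Lemma ruling_line_point (wy wz m t : R) :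
  ruling_line wy wz m (t, wy + t * m, wz - wy * t / 2).
Proof.
  exists t; unfold hmul, hpow; f_equal; [f_equal|]; lra.
Qed.

Lemma ruling_graph (f : R * R -> R) (L : Hpt -> Prop) (wy wz m : R) :
  is_ruling f L -> (forall q, L q <-> ruling_line wy wz m q) ->
  forall t, f (t, gR wy wz m t) = wy + t * m.
Proof.
  intros (p & v & _ & _ & HG) E t.
  pose proof (Gamma_projection f _ _ _ (HG _ (proj2 (E _) (ruling_line_point wy wz m t))))
    as Hf.
  replace (gR wy wz m t) with (wz - wy * t / 2 - t * (wy + t * m) / 2)
    by (unfold gR; simpl; field).
  exact Hf.
Qed.

Lemma discriminant_nonpos_of_double_roots (a b c : R) :
  (forall x, c + b * x + a * x ^ 2 = 0 -> b + 2 * a * x = 0) ->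
  b ^ 2 - 4 * a * c <= 0.
Proof.
  intros Hdouble; apply Rnot_lt_le; intros HD.
  destruct (Req_dec a 0) as [Ha | Ha].
  - subst a.
    assert (Hb : b <> 0) by (intros ->; lra).
    assert (Hroot : c + b * (- c / b) + 0 * (- c / b) ^ 2 = 0) by (field; exact Hb).
    apply Hdouble in Hroot; lra.
  - set (D := b ^ 2 - 4 * a * c) in HD.
    assert (HsD : sqrt D * sqrt D = D) by (apply sqrt_sqrt; lra).
    pose proof (sqrt_lt_R0 D HD) as Hpos.
    set (r := (- b + sqrt D) / (2 * a)).
    assert (Hr : 2 * a * r = - b + sqrt D) by (unfold r; field; exact Ha).
    assert (Hroot : c + b * r + a * r ^ 2 = 0).
    { apply (Rmult_eq_reg_l (4 * a)); [| lra].
      transitivity ((2 * a * r + b) ^ 2 - D); [unfold D; ring |].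
      rewrite Hr; simpl; lra. }
    apply Hdouble in Hroot; lra.
Qed.

Lemma quadratic_nonneg_of_discriminant_nonpos (a b c : R) :
  0 < c -> b ^ 2 - 4 * a * c <= 0 ->
  (forall x, 0 <= c + b * x + a * x ^ 2) /\ 0 <= a.
Proof.
  intros Hc HD.
  assert (Ha : 0 <= a) by nra.
  split; [| exact Ha]; intros x.
  destruct (Rle_lt_or_eq _ _ Ha) as [Hpos | <-].
  - apply (Rmult_le_reg_l (4 * a)); [lra |].
    replace (4 * a * (c + b * x + a * x ^ 2))
      with ((2 * a * x + b) ^ 2 - (b ^ 2 - 4 * a * c)) by ring.
    pose proof (pow2_ge_0 (2 * a * x + b)); lra.
  - assert (b = 0) as -> by nra; lra.
Qed.

Theorem lemma4p2 (f : R * R -> R)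
  (Hcont : forall u : R * R, continuous f u)
  (Hruled : ruled f)
  (R1 R2 : Hpt -> Prop) (wy1 wz1 m1 wy2 wz2 m2 : R)
  (HR1 : is_ruling f R1) (HR2 : is_ruling f R2)
  (E1 : forall q, R1 q <-> ruling_line wy1 wz1 m1 q)
  (E2 : forall q, R2 q <-> ruling_line wy2 wz2 m2 q)
  (Hdist : exists q, ~ (R1 q <-> R2 q))
  (Hz : wz1 < wz2) :
  (forall x : R, gR wy1 wz1 m1 x <= gR wy2 wz2 m2 x) /\ m1 >= m2.
Proof.
  pose proof (ruling_graph f R1 wy1 wz1 m1 HR1 E1) as G1.
  pose proof (ruling_graph f R2 wy2 wz2 m2 HR2 E2) as G2.
  assert (Hgap : forall x, gR wy2 wz2 m2 x - gR wy1 wz1 m1 x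
                           = (wz2 - wz1) + (wy1 - wy2) * x + (m1 - m2) / 2 * x ^ 2)
    by (intros; unfold gR; field).
  assert (Htangent : forall x, (wz2 - wz1) + (wy1 - wy2) * x + (m1 - m2) / 2 * x ^ 2 = 0 ->
                               (wy1 - wy2) + 2 * ((m1 - m2) / 2) * x = 0).
  { intros x Hx.
    assert (Hcross : gR wy1 wz1 m1 x = gR wy2 wz2 m2 x) by (rewrite <- Hgap in Hx; lra).
    pose proof (G1 x) as Hf; rewrite Hcross, G2 in Hf; lra. }
  destruct (quadratic_nonneg_of_discriminant_nonpos ((m1 - m2) / 2) (wy1 - wy2) (wz2 - wz1))
    as [Hnonneg Hlead]; [lra | exact (discriminant_nonpos_of_double_roots _ _ _ Htangent) |].
  split; [| lra].
  intros x; specialize (Hnonneg x); rewrite <- Hgap in Hnonneg; lra.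
Qed.
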